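(* Let $h$ be a bilinear form on $V$, $\bar h=\mathcal T(h)$ the associated endomorphism of $V$ (so $\langle\bar h(v),w\rangle=h(v,w)$), and $\widehat h$ the unique exterior algebra endomorphism of $\Lambda V$ extending $\bar h$ with $\widehat h(1)=1$, i.e. $\widehat h(v_1\wedge\cdots\wedge v_p)=\bar h(v_1)\wedge\cdots\wedge\bar h(v_p)$. Then $$\mathcal T(e^h)=\mathcal T\Big(\sum_{p\geq0}\frac{h^p}{p!}\Big)=\widehat h,$$ where $h^0=1$ and $h^p=0$ for $p>n$. In particular $\mathcal T\big(\frac{g^p}{p!}\big)=\mathrm{Id}_{\Lambda^pV}$.
   Context: $(V,g)$ is a Euclidean real vector space of dimension $n$, identified with $V^*$ via $g$. Double forms are elements of $\bigoplus_{p,q}\Lambda^pV^*\otimes\Lambda^qV^*$, a $(p,q)$ double form being viewed as a bilinear form on $\Lambda^pV\times\Lambda^qV$; bilinear forms on $V$ are $(1,1)$ double forms, and $g$ itself is one. Exterior product: $(\theta_1\otimes\theta_2)(\theta_3\otimes\theta_4)=(\theta_1\wedge\theta_3)\otimes(\theta_2\wedge\theta_4)$, extended bilinearly; $h^p$ is the $p$-th power for it. $\Lambda V$ carries the inner product induced by $g$. The linear isomorphism $\mathcal T$ from double forms to $L(\Lambda V,\Lambda V)$ is $\mathcal T(\omega_1\otimes\omega_2)(\theta)=\langle\omega_1^\sharp,\theta\rangle\omega_2^\sharp$, where $\omega^\sharp$ is the exterior vector dual to the form $\omega$; equivalently $\langle\mathcal T(\omega)u_1,u_2\rangle=\omega(u_1,u_2)$.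 *)

(* V = R^n with its standard (orthonormal) basis e_0..e_{n-1}. *)
From HB Require Import structures.
From mathcomp Require Import all_boot all_order all_algebra.
From mathcomp Require Import reals.
Set Implicit Arguments. Unset Strict Implicit. Unset Printing Implicit Defensive.
Import Order.TTheory GRing.Theory Num.Theory.
Local Open Scope ring_scope.

Section DoubleForms.
Variables (R : realType) (n : nat).

(* Exterior algebra Lambda V: coordinates in the orthonormal basis
   e_S = e_{i1} /\ ... /\ e_{ip}  (S = {i1 < ... < ip}). *)
Definition ext := {ffun {set 'I_n} -> R}.

(* Double forms: omega(S,T) = omega(e_S, e_T), i.e.
   omega = sum_{S,T} omega(S,T) e_S^* (x) e_T^*. *)
Definition dform := {ffun {set 'I_n} * {set 'I_n} -> R}.

Definition ebasis (S : {set 'I_n}) : ext := [ffun T => (T == S)%:R].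
Definition eone : ext := ebasis set0.

Definition eadd (u v : ext) : ext := [ffun S => u S + v S].
Definition escale (a : R) (u : ext) : ext := [ffun S => a * u S].

(* sign of e_S /\ e_T = sign * e_{S u T} for disjoint S, T *)
Definition wsign (S T : {set 'I_n}) : R :=
  (-1) ^+ #|[set ij : 'I_n * 'I_n | [&& ij.1 \in S, ij.2 \in T & (ij.2 < ij.1)%N]]|.

Definition wcoef (S T A : {set 'I_n}) : R :=
  if [disjoint S & T] && (S :|: T == A) then wsign S T else 0.

Definition wedge (u v : ext) : ext :=
  [ffun A => \sum_(S : {set 'I_n}) \sum_(T : {set 'I_n}) u S * v T * wcoef S T A].

Definition vec (v : 'I_n -> R) : ext :=
  [ffun S => \sum_(i : 'I_n) v i * (S == [set i])%:R].

Definition homog (p : nat) (u : ext) : Prop := forall S : {set 'I_n}, #|S| != p -> u S = 0.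

(* exterior product of double forms:
   (t1 (x) t2)(t3 (x) t4) = (t1 /\ t3) (x) (t2 /\ t4), extended bilinearly *)
Definition dprod (w e : dform) : dform :=
  [ffun AB : {set 'I_n} * {set 'I_n} =>
     \sum_(S : {set 'I_n}) \sum_(S' : {set 'I_n}) \sum_(T : {set 'I_n}) \sum_(T' : {set 'I_n})
       w (S, T) * e (S', T') * wcoef S S' AB.1 * wcoef T T' AB.2].

Definition done : dform := [ffun AB => ((AB.1 == set0) && (AB.2 == set0))%:R].

Definition dpow (w : dform) (p : nat) : dform := iter p (dprod w) done.

Definition dadd (w e : dform) : dform := [ffun AB => w AB + e AB].
Definition dscale (a : R) (w : dform) : dform := [ffun AB => a * w AB].
Definition dzero : dform := [ffun _ => 0].

(* bilinear form h on V (matrix h i j = h(e_i,e_j)) seen as a (1,1) double form *)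
Definition dform_of_bil (h : 'M[R]_n) : dform :=
  [ffun AB => \sum_(i : 'I_n) \sum_(j : 'I_n)
                 h i j * ((AB.1 == [set i]) && (AB.2 == [set j]))%:R].

Definition gmetric : 'M[R]_n := 1%:M.

Definition dexp_trunc (w : dform) (N : nat) : dform :=
  \big[dadd/dzero]_(p < N) dscale (p`!%:R)^-1 (dpow w p).

(* T : double forms -> L(Lambda V, Lambda V), <T(w) u1, u2> = w(u1, u2) *)
Definition Tmap (w : dform) (u : ext) : ext :=
  [ffun B => \sum_(A : {set 'I_n}) u A * w (A, B)].

(* hbar = T(h) restricted to V: <hbar v, w> = h(v, w) *)
Definition hbar (h : 'M[R]_n) (v : 'I_n -> R) : 'I_n -> R :=
  fun j => \sum_(i : 'I_n) v i * h i j.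

End DoubleForms.

From HB Require Import structures.
From mathcomp Require Import all_boot all_order all_algebra.
From mathcomp Require Import reals.
From mathcomp Require Import ring lra.
Set Implicit Arguments. Unset Strict Implicit. Unset Printing Implicit Defensive.
Import Order.TTheory GRing.Theory Num.Theory.
Local Open Scope ring_scope.

(* Under T the exterior product of double forms becomes the exterior product of images:
   T(w e)(e_A) is the sum over splittings A = S u S' of +-T(w)(e_S) /\ T(e)(e_S').
   Expanding h^(p+1) along its first factor h, which sends e_i to hbar(e_i), an induction
   on p gives T(h^p)(e_A) = p! hbar(e_a1) /\ ... /\ hbar(e_ap) if A = {a1 < ... < ap}, and 0
   if |A| <> p: each of the p elements i of A contributes the same term, because the sign
   of the splitting {i} u (A - i) is exactly the sign needed to move hbar(e_i) into its
   place.  Dividing by p! and summing over p, T(e^h) maps e_A to the ordered wedge of the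
   hbar(e_a), i.e. it is the algebra morphism extending hbar; for h = g, hbar = id. *)

Lemma disjointsUl (T : finType) (A B C : {set T}) :
  [disjoint A :|: B & C] = [disjoint A & C] && [disjoint B & C].
Proof. by rewrite -!setI_eq0 setIUl setU_eq0. Qed.

Lemma disjointsUr (T : finType) (A B C : {set T}) :
  [disjoint A & B :|: C] = [disjoint A & B] && [disjoint A & C].
Proof. by rewrite -!setI_eq0 setIUr setU_eq0. Qed.

Lemma sum_delta (R : nzRingType) (I : finType) (i0 : I) (G : I -> R) :
  \sum_i (i == i0)%:R * G i = G i0.
Proof.
rewrite (bigD1 i0) //= eqxx mul1r big1 ?addr0 // => i /negbTE ->.
by rewrite mul0r.
Qed.

Lemma natr_fact_neq0 (R : numDomainType) p : p`!%:R != 0 :> R.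
Proof. by rewrite pnatr_eq0 -lt0n fact_gt0. Qed.

Lemma exchange_big3 (R : nmodType) (I J K : finType) (F : I -> J -> K -> R) :
  \sum_i \sum_j \sum_k F i j k = \sum_j \sum_k \sum_i F i j k.
Proof. by rewrite exchange_big; under eq_bigr do rewrite exchange_big. Qed.

Section Sign.
Variables (R : realType) (n : nat).
Implicit Types (S T U A B : {set 'I_n}).

Definition inversions S T :=
  [set ij : 'I_n * 'I_n | [&& ij.1 \in S, ij.2 \in T & (ij.2 < ij.1)%N]].

Lemma wsignE S T : wsign R S T = (-1) ^+ #|inversions S T|.
Proof. by []. Qed.

Lemma wsign_sq S T : wsign R S T * wsign R S T = 1.
Proof. by rewrite -exprD addnn -mul2n exprM sqrrN !expr1n. Qed.

Lemma wsign_inversionsU S T I1 I2 : I1 :&: I2 = set0 ->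
  inversions S T = I1 :|: I2 ->
  wsign R S T = (-1) ^+ #|I1| * (-1) ^+ #|I2|.
Proof. by move=> I12 eST; rewrite wsignE eST cardsU I12 cards0 subn0 exprD. Qed.

Lemma wsignUl S1 S2 T : [disjoint S1 & S2] ->
  wsign R (S1 :|: S2) T = wsign R S1 T * wsign R S2 T.
Proof.
move=> dS; apply: wsign_inversionsU.
  apply/setP => -[i j]; rewrite !inE /=.
  by case: (boolP (i \in S1)) => iS1; rewrite ?(disjointFr dS iS1) ?andbF.
by apply/setP => -[i j]; rewrite !inE /= andb_orl.
Qed.

Lemma wsignUr S T1 T2 : [disjoint T1 & T2] ->
  wsign R S (T1 :|: T2) = wsign R S T1 * wsign R S T2.
Proof.
move=> dT; apply: wsign_inversionsU.
  apply/setP => -[i j]; rewrite !inE /=.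
  by case: (boolP (j \in T1)) => jT1; rewrite ?(disjointFr dT jT1) !andbF.
apply/setP => -[i j]; rewrite !inE /=.
by case: (i \in S); case: (j \in T1); case: (j \in T2); case: (j < i)%N.
Qed.

Lemma wsign_lt S T :
  (forall a b, a \in S -> b \in T -> (a < b)%N) -> wsign R S T = 1.
Proof.
move=> ST; rewrite wsignE (_ : inversions S T = set0) ?cards0 //.
apply/setP => -[i j]; rewrite !inE /=; apply/and3P => -[iS jT].
by rewrite ltnNge ltnW ?ST.
Qed.

Lemma wsign0l T : wsign R set0 T = 1.
Proof. by apply: wsign_lt => a b; rewrite inE. Qed.

Lemma wsign0r S : wsign R S set0 = 1.
Proof. by apply: wsign_lt => a b _; rewrite inE. Qed.

Lemma wsign11 (i k : 'I_n) :
  wsign R [set i] [set k] = if (k < i)%N then -1 else 1.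
Proof.
rewrite wsignE; have [lt_ki|le_ik] := ltnP k i.
  rewrite (_ : inversions _ _ = [set (i, k)]) ?cards1 ?expr1 //.
  apply/setP => -[a b]; rewrite !inE xpair_eqE /=.
  by case: eqP => [->|] //=; case: eqP => [->|] //=; rewrite lt_ki.
rewrite (_ : inversions _ _ = set0) ?cards0 //.
by apply/setP => -[a b]; rewrite !inE; apply/and3P => -[/eqP-> /eqP->]; rewrite ltnNge le_ik.
Qed.

Lemma sum_wcoef_union S T (g : {set 'I_n} -> R) :
  \sum_A wcoef R S T A * g A =
    if [disjoint S & T] then wsign R S T * g (S :|: T) else 0.
Proof.
rewrite /wcoef; case: ifP => dST; last by rewrite big1 // => A _; rewrite mul0r.
rewrite (bigD1 (S :|: T)) //= eqxx big1 ?addr0 // => A /negbTE.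
by rewrite eq_sym => ->; rewrite mul0r.
Qed.

Lemma sum_wcoef_complement S A (g : {set 'I_n} -> R) :
  \sum_T wcoef R S T A * g T =
    if S \subset A then wsign R S (A :\: S) * g (A :\: S) else 0.
Proof.
have wcoefE T : wcoef R S T A =
    if (S \subset A) && (T == A :\: S) then wsign R S T else 0.
  rewrite /wcoef; congr (if _ then _ else _).
  apply/andP/andP => [[dST /eqP <-] | [SA /eqP ->]].
    rewrite subsetUl setDUl setDv set0U; split=> //.
    by apply/eqP/esym/setDidPl; rewrite disjoint_sym.
  by rewrite -setI_eq0 setDE setICA setICr setI0 setUIr setUCr setIT (setUidPr SA).
under eq_bigr => T _ do rewrite wcoefE.
case: (S \subset A); last by rewrite big1 // => T _; rewrite mul0r.
rewrite (bigD1 (A :\: S)) //= eqxx big1 ?addr0 // => T /negbTE /= ->.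
by rewrite mul0r.
Qed.

Lemma wcoef_assoc S T U B :
  \sum_A wcoef R S T A * wcoef R A U B = \sum_A wcoef R T U A * wcoef R S A B.
Proof.
rewrite !sum_wcoef_union /wcoef disjointsUl disjointsUr setUA.
case: (boolP [disjoint S & T]) => dST; case: (boolP [disjoint T & U]) => dTU;
  case: (boolP [disjoint S & U]) => dSU; rewrite /= ?mulr0 //.
case: eqP => _; last by rewrite !mulr0.
by rewrite wsignUl // wsignUr //; ring.
Qed.

End Sign.

Section Wedge.
Variables (R : realType) (n : nat).
Notation E := {ffun {set 'I_n} -> R}.
Implicit Types (S T U A B : {set 'I_n}) (u v w : E).

Lemma wedgeE u v A : wedge u v A = \sum_S \sum_T u S * v T * wcoef R S T A.
Proof. by rewrite ffunE. Qed.

Lemma escaleE a u S : escale a u S = a * u S.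
Proof. by rewrite ffunE. Qed.

Lemma escale1 u : escale 1 u = u.
Proof. by apply/ffunP => S; rewrite escaleE mul1r. Qed.

Lemma escaleA a b u : escale a (escale b u) = escale (a * b) u.
Proof. by apply/ffunP => S; rewrite !escaleE mulrA. Qed.

Lemma escale0 a : escale a (0 : E) = 0.
Proof. by apply/ffunP => S; rewrite escaleE !ffunE mulr0. Qed.

Lemma wedgeDl u1 u2 v : wedge (u1 + u2) v = wedge u1 v + wedge u2 v.
Proof.
apply/ffunP => A; rewrite !ffunE -big_split; apply: eq_bigr => S _.
by rewrite -big_split; apply: eq_bigr => T _ /=; rewrite !ffunE; ring.
Qed.

Lemma wedgeDr u v1 v2 : wedge u (v1 + v2) = wedge u v1 + wedge u v2.
Proof.
apply/ffunP => A; rewrite !ffunE -big_split; apply: eq_bigr => S _.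
by rewrite -big_split; apply: eq_bigr => T _ /=; rewrite !ffunE; ring.
Qed.

Lemma wedgeZl a u v : wedge (escale a u) v = escale a (wedge u v).
Proof.
apply/ffunP => A; rewrite escaleE !wedgeE mulr_sumr; apply: eq_bigr => S _.
by rewrite mulr_sumr; apply: eq_bigr => T _; rewrite escaleE; ring.
Qed.

Lemma wedgeZr a u v : wedge u (escale a v) = escale a (wedge u v).
Proof.
apply/ffunP => A; rewrite escaleE !wedgeE mulr_sumr; apply: eq_bigr => S _.
by rewrite mulr_sumr; apply: eq_bigr => T _; rewrite escaleE; ring.
Qed.

Lemma wedge0l v : wedge 0 v = 0.
Proof.
apply/ffunP => A; rewrite !ffunE big1 // => S _.
by rewrite big1 // => T _; rewrite ffunE !mul0r.
Qed.

Lemma wedge0r u : wedge u 0 = 0.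
Proof.
apply/ffunP => A; rewrite !ffunE big1 // => S _.
by rewrite big1 // => T _; rewrite ffunE mulr0 !mul0r.
Qed.

Lemma wedgeNl u v : wedge (- u) v = - wedge u v.
Proof. by apply/eqP; rewrite -addr_eq0 -wedgeDl addNr wedge0l. Qed.

Lemma wedge_suml (I : finType) (a : I -> R) (x : I -> E) v :
  wedge (\sum_i escale (a i) (x i)) v = \sum_i escale (a i) (wedge (x i) v).
Proof.
rewrite (big_morph (fun u : E => wedge u v) (fun u1 u2 => wedgeDl u1 u2 v) (wedge0l v)).
by apply: eq_bigr => i _; rewrite wedgeZl.
Qed.

Lemma wedge_sumr (I : finType) (a : I -> R) (x : I -> E) u :
  wedge u (\sum_i escale (a i) (x i)) = \sum_i escale (a i) (wedge u (x i)).
Proof.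
rewrite (big_morph (fun v : E => wedge u v) (wedgeDr u) (wedge0r u)).
by apply: eq_bigr => i _; rewrite wedgeZr.
Qed.

Lemma wedge_basis S T : wedge (ebasis R S) (ebasis R T) = [ffun A => wcoef R S T A].
Proof.
apply/ffunP => A; rewrite wedgeE ffunE (bigD1 S) //= [X in _ + X]big1 ?addr0.
  rewrite (bigD1 T) //= [X in _ + X]big1 ?addr0; first by rewrite !ffunE !eqxx !mul1r.
  by move=> T' /negbTE nTT'; rewrite !ffunE nTT' mulr0 mul0r.
by move=> S' /negbTE nSS'; apply: big1 => T' _; rewrite ffunE nSS' !mul0r.
Qed.

Lemma wedge1l v : wedge (eone R n) v = v.
Proof.
apply/ffunP => A; rewrite wedgeE (bigD1 set0) //= [X in _ + X]big1 ?addr0.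
  rewrite (bigD1 A) //= [X in _ + X]big1 ?addr0.
    by rewrite ffunE eqxx mul1r /wcoef -setI_eq0 set0I set0U !eqxx wsign0l mulr1.
  by move=> T /negbTE nTA; rewrite /wcoef set0U nTA andbF mulr0.
by move=> S /negbTE nS0; apply: big1 => T _; rewrite ffunE nS0 !mul0r.
Qed.

Lemma wedge1r u : wedge u (eone R n) = u.
Proof.
apply/ffunP => A; rewrite wedgeE (bigD1 A) //= [X in _ + X]big1 ?addr0.
  rewrite (bigD1 set0) //= [X in _ + X]big1 ?addr0.
    by rewrite ffunE eqxx mulr1 /wcoef -setI_eq0 setI0 setU0 !eqxx wsign0r mulr1.
  by move=> T /negbTE nT0; rewrite ffunE nT0 mulr0 mul0r.
move=> S /negbTE nSA; apply: big1 => T _; rewrite ffunE /wcoef.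
case: (eqVneq T set0) => [->|nT0]; first by rewrite setU0 nSA andbF mulr0.
by rewrite mulr0 mul0r.
Qed.

Lemma wedgeA u v w : wedge (wedge u v) w = wedge u (wedge v w).
Proof.
apply/ffunP => B; rewrite !wedgeE.
pose c S T U := u S * v T * w U.
transitivity (\sum_S \sum_T \sum_U c S T U * \sum_A wcoef R S T A * wcoef R A U B).
  transitivity (\sum_A \sum_U \sum_S \sum_T c S T U * (wcoef R S T A * wcoef R A U B)).
    apply: eq_bigr => A _; apply: eq_bigr => U _; rewrite wedgeE -mulrA big_distrl.
    apply: eq_bigr => S _; rewrite big_distrl; apply: eq_bigr => T _ /=; rewrite /c; ring.
  rewrite exchange_big3; under eq_bigr do under eq_bigr do rewrite exchange_big.
  rewrite exchange_big3; apply: eq_bigr => S _; apply: eq_bigr => T _.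
  by apply: eq_bigr => U _; rewrite mulr_sumr.
apply: eq_bigr => S _; under eq_bigr do under eq_bigr do rewrite wcoef_assoc mulr_sumr.
rewrite -exchange_big3; apply: eq_bigr => A _.
rewrite wedgeE [RHS]mulrAC big_distrr; apply: eq_bigr => T _.
by rewrite big_distrr; apply: eq_bigr => U _ /=; rewrite /c; ring.
Qed.

Lemma wcoef_cards1C S T A : #|S| = 1%N -> #|T| = 1%N -> wcoef R S T A = - wcoef R T S A.
Proof.
move=> /eqP/cards1P[i ->] /eqP/cards1P[k ->].
rewrite /wcoef !disjoints1 !inE setUC eq_sym.
have [->|nik] := eqVneq i k; first by rewrite oppr0.
case: ifP => _; last by rewrite oppr0.
rewrite !wsign11; case: ltngtP => [| |/val_inj eik]; rewrite ?opprK //.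
by rewrite eik eqxx in nik.
Qed.

Lemma wedge_homog1C u v : homog 1 u -> homog 1 v -> wedge u v = - wedge v u.
Proof.
move=> hu hv; apply/ffunP => A; rewrite !ffunE [in RHS]exchange_big -sumrN.
apply: eq_bigr => S _; rewrite -sumrN; apply: eq_bigr => T _ /=.
have [hS|/hu->] := eqVneq #|S| 1%N; last by ring.
have [hT|/hv->] := eqVneq #|T| 1%N; last by ring.
by rewrite (wcoef_cards1C A hS hT); ring.
Qed.

Lemma wedge_homog1_self u : homog 1 u -> wedge u u = 0.
Proof.
move=> hu; apply/ffunP => A; have := congr1 (fun x : E => x A) (wedge_homog1C hu hu).
by rewrite !ffunE => eA; lra.
Qed.

End Wedge.

Section OrderedWedge.
Variables (R : realType) (n : nat) (x : 'I_n -> {ffun {set 'I_n} -> R}).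
Hypothesis x_homog1 : forall i, homog 1 (x i).
Notation E := {ffun {set 'I_n} -> R}.
Implicit Types (s : seq 'I_n) (S T U A B : {set 'I_n}).

Definition wedge_seq s A : E := \big[@wedge R n/eone R n]_(i <- s | i \in A) x i.

Definition wedge_set A : E := wedge_seq (enum 'I_n) A.

Lemma eq_wedge_seq s A B : {in s, A =i B} -> wedge_seq s A = wedge_seq s B.
Proof.
move=> eAB; rewrite /wedge_seq [LHS]big_seq_cond [RHS]big_seq_cond.
by apply: eq_bigl => i; case: (boolP (i \in s)) => // /eAB ->.
Qed.

Lemma wedge_xCA i k w : wedge (x i) (wedge (x k) w) = - wedge (x k) (wedge (x i) w).
Proof. by rewrite -!wedgeA (wedge_homog1C (x_homog1 i) (x_homog1 k)) wedgeNl. Qed.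

Lemma wedge_xx i w : wedge (x i) (wedge (x i) w) = 0.
Proof. by rewrite -wedgeA wedge_homog1_self // wedge0l. Qed.

Lemma wedge_seq_cons k s U : wedge_seq (k :: s) U =
  if k \in U then wedge (x k) (wedge_seq s U) else wedge_seq s U.
Proof. exact: big_cons. Qed.

Lemma path_ltn_min k s j : path (relpre val ltn) k s -> j \in s -> (k < j)%N.
Proof. by move=> /(order_path_min (fun _ _ _ => @ltn_trans _ _ _))/allP/[apply]. Qed.

Lemma wedge_seq_head k s U : path (relpre val ltn) k s ->
  wedge (x k) (wedge_seq (k :: s) U) =
    if k \in U then 0 else wedge_seq (k :: s) (k |: U).
Proof.
move=> ks; rewrite !wedge_seq_cons setU11.
case: ifP => kU; first exact: wedge_xx.
congr wedge; apply: eq_wedge_seq => j js; rewrite in_setU1.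
by case: eqP => // jk; have := path_ltn_min ks js; rewrite jk ltnn.
Qed.

(* Moving [x i] past the factors [x k], [k < i], of [U] costs the sign [wsign [set i] U]. *)
Lemma wedge_x_seq i s U : sorted (relpre val ltn) s -> i \in s -> {subset U <= s} ->
  wedge (x i) (wedge_seq s U) =
    if i \in U then 0 else escale (wsign R [set i] U) (wedge_seq s (i |: U)).
Proof.
elim: s U => [//|k s IH] U srt_ks; have srt_s := path_sorted srt_ks.
have lt_k j : j \in s -> (k < j)%N := path_ltn_min srt_ks.
have Us_k (V : {set 'I_n}) : {subset V <= k :: s} -> k \notin V -> {subset V <= s}.
  by move=> Vks kV j jV; case/predU1P: (Vks j jV) => // jk; rewrite -jk jV in kV.
rewrite inE => /predU1P[-> | i_s] Uks.
  rewrite wedge_seq_head //; case: ifP => // /negbT kU.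
  rewrite wsign_lt ?escale1 // => _ j /set1P-> /(Us_k _ Uks kU); exact: lt_k.
have lt_ki := lt_k i i_s.
have nik : i != k by apply: contraTneq lt_ki => ->; rewrite ltnn.
have [kU|kU] := boolP (k \in U); last first.
  rewrite !wedge_seq_cons in_setU1 eq_sym (negbTE nik) (negbTE kU) /=.
  exact: IH (Us_k _ Uks kU).
have drop_k V : wedge_seq s V = wedge_seq s (V :\ k).
  apply: eq_wedge_seq => j js; rewrite in_setD1.
  by case: eqP => // jk; have := lt_k j js; rewrite jk ltnn.
have Uks' : {subset U :\ k <= s} by apply: Us_k; [move=> j /setD1P[_ /Uks] | rewrite setD11].
rewrite wedge_seq_cons kU wedge_xCA drop_k IH // in_setD1 nik /=.
case: ifP => iU; first by rewrite wedge0r oppr0.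
rewrite wedge_seq_cons in_setU1 kU orbT (drop_k (i |: U)) wedgeZr.
have -> : (i |: U) :\ k = i |: (U :\ k).
  by apply/setP => j; rewrite !inE; case: (eqVneq j i) => [->|]; rewrite ?nik.
have -> : wsign R [set i] U = - wsign R [set i] (U :\ k).
  rewrite -{1}(setD1K kU) wsignUr ?disjoints1 ?setD11 //.
  by rewrite wsign11 lt_ki mulN1r.
by apply/ffunP => B; rewrite !ffunE; ring.
Qed.

Lemma sorted_enum_ord : sorted (relpre val ltn) (enum 'I_n).
Proof. by rewrite -sorted_map val_enum_ord iota_ltn_sorted. Qed.

Lemma wedge_x_set i U : wedge (x i) (wedge_set U) =
  if i \in U then 0 else escale (wsign R [set i] U) (wedge_set (i |: U)).
Proof. by apply: wedge_x_seq => [||j _]; rewrite ?sorted_enum_ord ?mem_enum. Qed.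

Lemma wedge_set0 : wedge_set set0 = eone R n.
Proof. by apply: big_pred0 => i; rewrite inE. Qed.

Lemma wedge_set1 i : wedge_set [set i] = x i.
Proof.
have := wedge_x_set i set0; rewrite inE wedge_set0 wedge1r setU0 => ->.
by rewrite wsign0r escale1.
Qed.

Lemma wedge_setD1 A m : m \in A ->
  wedge_set A = escale (wsign R [set m] (A :\ m)) (wedge (x m) (wedge_set (A :\ m))).
Proof. by move=> mA; rewrite wedge_x_set setD11 setD1K // escaleA wsign_sq escale1. Qed.

Lemma wedge_set_mul S T : wedge (wedge_set S) (wedge_set T) =
  if [disjoint S & T] then escale (wsign R S T) (wedge_set (S :|: T)) else 0.
Proof.
have [k] := ubnP #|S|; elim: k S => // k IH S; rewrite ltnS => leSk.
have [->|[m mS]] := set_0Vmem S.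
  by rewrite wedge_set0 wedge1l -setI_eq0 set0I eqxx set0U wsign0l escale1.
have ltS'k : (#|S :\ m| < k)%N by rewrite (cardsD1 m S) mS in leSk.
rewrite (wedge_setD1 mS) wedgeZl wedgeA IH // -[in RHS](setD1K mS) disjointsUl disjoints1.
have [dS'T|] := boolP [disjoint S :\ m & T]; last by rewrite andbF wedge0r escale0.
rewrite andbT wedgeZr wedge_x_set in_setU setD11 /=.
have [mT|mT] := boolP (m \in T); first by rewrite !escale0.
rewrite /= !escaleA setUA wsignUl ?disjoints1 ?setD11 // wsignUr // (setD1K mS).
by congr escale; rewrite mulrACA wsign_sq mul1r mulrC.
Qed.

(* The paper's \widehat h when [x] is [hbar_basis h]. *)
Definition ext_extend (u : E) : E := \sum_A escale (u A) (wedge_set A).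

Lemma ext_extend_basis S : ext_extend (ebasis R S) = wedge_set S.
Proof.
rewrite /ext_extend (bigD1 S) //= big1 ?addr0 => [|T /negbTE nTS].
  by rewrite ffunE eqxx escale1.
by apply/ffunP => B; rewrite !ffunE nTS mul0r.
Qed.

Lemma ext_extend_vec (v : 'I_n -> R) : ext_extend (vec v) = \sum_i escale (v i) (x i).
Proof.
apply/ffunP => B; rewrite !sum_ffunE.
under eq_bigr => A _ do rewrite escaleE ffunE big_distrl.
rewrite exchange_big; apply: eq_bigr => i _ /=.
under eq_bigr => A _ do rewrite mulrAC mulrC.
by rewrite sum_delta wedge_set1 escaleE.
Qed.

Lemma ext_extend_wedge u v : ext_extend (wedge u v) = wedge (ext_extend u) (ext_extend v).
Proof.
rewrite /ext_extend wedge_suml; under [RHS]eq_bigr do rewrite wedge_sumr.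
apply/ffunP => B; rewrite !sum_ffunE.
transitivity (\sum_S \sum_T u S * v T * \sum_A wcoef R S T A * wedge_set A B).
  under eq_bigr => A _ do rewrite escaleE wedgeE big_distrl.
  under eq_bigr => A _ do under eq_bigr => S _ do rewrite big_distrl.
  rewrite exchange_big3; apply: eq_bigr => S _; apply: eq_bigr => T _.
  by rewrite mulr_sumr; apply: eq_bigr => A _ /=; rewrite mulrA.
apply: eq_bigr => S _; rewrite escaleE sum_ffunE mulr_sumr; apply: eq_bigr => T _.
rewrite escaleE wedge_set_mul sum_wcoef_union.
by case: ifP => _; rewrite ?escaleE ?ffunE; ring.
Qed.

End OrderedWedge.

Section Tmap.
Variables (R : realType) (n : nat).
Notation E := {ffun {set 'I_n} -> R}.
Implicit Types (S T A B : {set 'I_n}) (w e : dform R n) (u v : E).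

Lemma Tmap_basis w S : Tmap w (ebasis R S) = [ffun T => w (S, T)].
Proof.
apply/ffunP => T; rewrite !ffunE (bigD1 S) //= big1 ?addr0 => [|S' /negbTE nS'S].
  by rewrite ffunE eqxx mul1r.
by rewrite ffunE nS'S mul0r.
Qed.

Lemma Tmap_expand w u : Tmap w u = \sum_A escale (u A) (Tmap w (ebasis R A)).
Proof.
apply/ffunP => B; rewrite ffunE sum_ffunE; apply: eq_bigr => A _.
by rewrite escaleE Tmap_basis ffunE.
Qed.

Lemma Tmap_linear w a u v :
  Tmap w (eadd (escale a u) v) = eadd (escale a (Tmap w u)) (Tmap w v).
Proof.
apply/ffunP => B; rewrite !ffunE mulr_sumr -big_split /=.
by apply: eq_bigr => A _; rewrite !ffunE; ring.
Qed.

Lemma Tmap_dadd w e u : Tmap (dadd w e) u = Tmap w u + Tmap e u.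
Proof.
apply/ffunP => B; rewrite !ffunE -big_split; apply: eq_bigr => A _ /=.
by rewrite ffunE mulrDr.
Qed.

Lemma Tmap_dzero u : Tmap (dzero R n) u = 0.
Proof. by apply/ffunP => B; rewrite !ffunE big1 // => A _; rewrite ffunE mulr0. Qed.

Lemma Tmap_dscale a w u : Tmap (dscale a w) u = escale a (Tmap w u).
Proof.
apply/ffunP => B; rewrite !ffunE mulr_sumr; apply: eq_bigr => A _.
by rewrite ffunE mulrCA.
Qed.

Lemma Tmap_dprod_basis w e A : Tmap (dprod w e) (ebasis R A) =
  \sum_S \sum_S' escale (wcoef R S S' A) (wedge (Tmap w (ebasis R S)) (Tmap e (ebasis R S'))).
Proof.
apply/ffunP => B; rewrite Tmap_basis !ffunE sum_ffunE; apply: eq_bigr => S _.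
rewrite sum_ffunE; apply: eq_bigr => S' _.
rewrite escaleE wedgeE mulr_sumr; apply: eq_bigr => T _.
by rewrite mulr_sumr; apply: eq_bigr => T' _; rewrite !Tmap_basis !ffunE; ring.
Qed.

End Tmap.

Section Vectors.
Variables (R : realType) (n : nat).
Notation E := {ffun {set 'I_n} -> R}.

Lemma homog1_vec (v : 'I_n -> R) : homog 1 (vec v).
Proof.
move=> B B1; rewrite ffunE big1 // => j _.
by rewrite (_ : B == _ = false) ?mulr0 //; apply: contraNF B1 => /eqP->; rewrite cards1.
Qed.

Lemma vec_sum (v : 'I_n -> R) (x : 'I_n -> 'I_n -> R) :
  vec (fun j => \sum_i v i * x i j) = \sum_i escale (v i) (vec (x i)).
Proof.
apply/ffunP => B; rewrite !ffunE sum_ffunE.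
under eq_bigr do rewrite big_distrl.
rewrite exchange_big; apply: eq_bigr => i _ /=.
by rewrite escaleE ffunE mulr_sumr; apply: eq_bigr => j _; rewrite mulrA.
Qed.

Lemma vec_delta (i : 'I_n) : vec (fun j => (j == i)%:R) = ebasis R [set i].
Proof. by apply/ffunP => B; rewrite !ffunE sum_delta. Qed.

Lemma wedge_set_basis A : wedge_set (fun i : 'I_n => ebasis R [set i]) A = ebasis R A.
Proof.
have homog1_basis (i : 'I_n) : homog 1 (ebasis R [set i]).
  by rewrite -vec_delta; exact: homog1_vec.
have [k] := ubnP #|A|; elim: k A => // k IH A; rewrite ltnS => leAk.
have [->|[m mA]] := set_0Vmem A; first exact: wedge_set0.
have ltA'k : (#|A :\ m| < k)%N by rewrite (cardsD1 m A) mA in leAk.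
rewrite (wedge_setD1 homog1_basis mA) IH // wedge_basis.
apply/ffunP => B; rewrite !ffunE /wcoef disjoints1 setD11 setD1K //=.
by case: eqP => [->|]; rewrite ?eqxx ?wsign_sq // eq_sym => /eqP/negbTE->; rewrite mulr0.
Qed.

End Vectors.

Section BilinearForm.
Variables (R : realType) (n : nat) (h : 'M[R]_n).
Notation E := {ffun {set 'I_n} -> R}.
Implicit Types (S A B : {set 'I_n}).

Definition hbar_basis (i : 'I_n) : E := vec (fun j => h i j).

Lemma vec_hbar (v : 'I_n -> R) : vec (hbar h v) = \sum_i escale (v i) (hbar_basis i).
Proof. exact: vec_sum. Qed.

Lemma Tmap_bil_basis S :
  Tmap (dform_of_bil h) (ebasis R S) = \sum_i escale (S == [set i])%:R (hbar_basis i).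
Proof.
apply/ffunP => B; rewrite Tmap_basis !ffunE sum_ffunE; apply: eq_bigr => i _.
rewrite escaleE ffunE mulr_sumr; apply: eq_bigr => j _ /=.
by case: (_ == _); case: (_ == _); rewrite /= ?mulr0 ?mulr1 ?mul0r ?mul1r.
Qed.

Lemma Tmap_bil_dprod (w : dform R n) A :
  Tmap (dprod (dform_of_bil h) w) (ebasis R A) = \sum_(i in A)
    escale (wsign R [set i] (A :\ i)) (wedge (hbar_basis i) (Tmap w (ebasis R (A :\ i)))).
Proof.
apply/ffunP => B; rewrite Tmap_dprod_basis sum_ffunE.
transitivity (\sum_S \sum_S' \sum_i (S == [set i])%:R *
   (wcoef R S S' A * wedge (hbar_basis i) (Tmap w (ebasis R S')) B)).
  apply: eq_bigr => S _; rewrite sum_ffunE; apply: eq_bigr => S' _.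
  rewrite escaleE Tmap_bil_basis wedge_suml sum_ffunE mulr_sumr; apply: eq_bigr => i _.
  by rewrite escaleE; ring.
rewrite exchange_big3 exchange_big3 sum_ffunE [RHS]big_mkcond /=; apply: eq_bigr => i _.
under eq_bigr do rewrite -mulr_sumr.
by rewrite sum_delta sum_wcoef_complement sub1set; case: (i \in A); rewrite ?escaleE.
Qed.

Lemma Tmap_bil_dpow p A : Tmap (dpow (dform_of_bil h) p) (ebasis R A) =
  escale ((#|A| == p)%:R * p`!%:R) (wedge_set hbar_basis A).
Proof.
elim: p A => [|p IH] A.
  apply/ffunP => B; rewrite Tmap_basis !ffunE cards_eq0.
  have [->|_] := eqVneq A set0; last by rewrite !mul0r.
  by rewrite wedge_set0 !ffunE !mul1r.
rewrite /dpow iterS -/(dpow _ p) Tmap_bil_dprod.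
transitivity (\sum_(i in A) escale ((#|A| == p.+1)%:R * p`!%:R) (wedge_set hbar_basis A)).
  apply: eq_bigr => i iA; rewrite IH wedgeZr wedge_x_set ?setD11 ?setD1K //; last first.
    by move=> j; exact: homog1_vec.
  rewrite (cardsD1 i A) iA add1n eqSS !escaleA; congr escale.
  by rewrite mulrAC wsign_sq mul1r.
apply/ffunP => B; rewrite sum_ffunE sumr_const !escaleE.
have [->|_] := eqVneq #|A| p.+1; last by rewrite !mul0r mul0rn.
by rewrite factS natrM -mulr_natr; ring.
Qed.

Lemma Tmap_bil_dexp N A : (n < N)%N ->
  Tmap (dexp_trunc (dform_of_bil h) N) (ebasis R A) = wedge_set hbar_basis A.
Proof.
move=> ltnN; rewrite /dexp_trunc.
rewrite (big_morph (fun w => Tmap w (ebasis R A) : E) (fun w e => Tmap_dadd w e _)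
  (Tmap_dzero _)).
have ltAN : (#|A| < N)%N.
  by rewrite (leq_ltn_trans _ ltnN) //; have := max_card (mem A); rewrite card_ord.
apply/ffunP => B; rewrite sum_ffunE (bigD1 (Ordinal ltAN)) //= big1 ?addr0 => [|p neq_pA].
  by rewrite Tmap_dscale Tmap_bil_dpow !escaleE eqxx mul1r mulrA mulVf ?mul1r ?natr_fact_neq0.
rewrite Tmap_dscale Tmap_bil_dpow !escaleE (_ : #|A| == p = false) ?mul0r ?mulr0 //.
by apply: contraNF neq_pA => /eqP eAp; apply/eqP/val_inj.
Qed.

End BilinearForm.

Lemma wedge_set_gmetric (R : realType) (n : nat) (A : {set 'I_n}) :
  wedge_set (hbar_basis (gmetric R n)) A = ebasis R A.
Proof.
rewrite -wedge_set_basis; apply: eq_bigr => i _.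
apply/ffunP => B; rewrite /hbar_basis -vec_delta !ffunE.
by apply: eq_bigr => j _; rewrite mxE eq_sym.
Qed.

Theorem mainTheorem6 (R : realType) (n : nat) (h : 'M[R]_n) :
  (forall N : nat, (n < N)%N ->
     let F := Tmap (dexp_trunc (dform_of_bil h) N) in
     (forall (a : R) (u v : ext R n), F (eadd (escale a u) v) = eadd (escale a (F u)) (F v)) /\
     (forall u v : ext R n, F (wedge u v) = wedge (F u) (F v)) /\
     F (eone R n) = eone R n /\
     (forall v : 'I_n -> R, F (vec v) = vec (hbar h v)))
  /\
  (forall (p : nat) (u : ext R n), homog p u ->
     Tmap (dscale (p`!%:R)^-1 (dpow (dform_of_bil (gmetric R n)) p)) u = u).
Proof.
split=> [N ltnN F | p u homog_u].
  have homog1_hbar i : homog 1 (hbar_basis h i) by exact: homog1_vec.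
  have FE u : F u = ext_extend (hbar_basis h) u.
    by rewrite /F Tmap_expand; apply: eq_bigr => A _; rewrite Tmap_bil_dexp.
  split; first exact: Tmap_linear.
  split=> [u v|]; first by rewrite !FE ext_extend_wedge.
  split; first by rewrite FE ext_extend_basis wedge_set0.
  by move=> v; rewrite FE ext_extend_vec //; symmetry; apply: vec_hbar.
rewrite Tmap_dscale Tmap_expand; apply/ffunP => B; rewrite escaleE sum_ffunE mulr_sumr.
rewrite -[RHS](sum_delta B (fun A => u A)); apply: eq_bigr => A _.
rewrite escaleE Tmap_bil_dpow wedge_set_gmetric !ffunE (eq_sym B).
have [<-|/homog_u->] := eqVneq #|A| p; last by rewrite !(mul0r, mulr0).
by rewrite mul1r; field; rewrite natr_fact_neq0.
Qed.
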